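(* Let $\alpha\in(0,1]$, let $J$ be a real symmetric $n\times n$ matrix with $J_{ii}=0$ and $\|J\|_{1\to1}=\max_i\sum_j|J_{ij}|\le1-\alpha$, let $h\in\mathbb{R}^n$, and let $q^n$ be the Ising measure on $\{-1,+1\}^n$ proportional to $\exp(\frac12\sum_{i,j}J_{ij}\sigma_i\sigma_j+\sum_ih_i\sigma_i)$. Then the coupling matrix $A$ of $q^n$ satisfies $\|A\|_{2\to2}\le\|J\|_{1\to1}\le1-\alpha$. Moreover, if $\|h\|_\infty\le\tilde\alpha$ for some $\tilde\alpha\ge0$, then there exist $c_{\alpha,\tilde\alpha},C_{\alpha,\tilde\alpha}>0$ depending only on $\alpha$ and $\tilde\alpha$ such that $q_i(s\mid\overline{\sigma_i})\in(c_{\alpha,\tilde\alpha},1-C_{\alpha,\tilde\alpha})$ for all $s\in\{-1,+1\}$, all $i$, all $n$ and all $\overline{\sigma_i}$.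
   Context: For $\sigma\in\{-1,+1\}^n$, $\overline{\sigma_i}=(\sigma_j)_{j\ne i}$ and $q_i(\cdot\mid\overline{\sigma_i})$ is the conditional law of the $i$-th spin given $\overline{\sigma_i}$ under $q^n$. The coupling matrix $A=(A_{ik})$ is defined by $A_{ii}=0$ and, for $i\ne k$, $A_{ik}=\sup\{d_{TV}(q_i(\cdot\mid\overline{x_i}),q_i(\cdot\mid\overline{z_i})):x,z\in\{-1,+1\}^n,\ \overline{x_k}=\overline{z_k}\}$, where $d_{TV}$ is total variation distance. $\|A\|_{2\to2}$ is the Euclidean operator norm. *)

From HB Require Import structures.
From mathcomp Require Import all_boot all_order all_algebra.
From mathcomp Require Import all_classical all_reals all_analysis.
Set Implicit Arguments. Unset Strict Implicit. Unset Printing Implicit Defensive.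
Import Order.TTheory GRing.Theory Num.Theory.
Local Open Scope ring_scope.
Local Open Scope classical_set_scope.

Section Ising.
Variable R : realType.
Variable n : nat.

(* spin configurations sigma in {-1,+1}^n, encoded by booleans (true = +1) *)
Definition config := {ffun 'I_n -> bool}.
Definition spin (b : bool) : R := if b then 1 else -1.

Definition ising_weight (J : 'M[R]_n) (h : 'I_n -> R) (x : config) : R :=
  expR (2^-1 * (\sum_i \sum_j J i j * spin (x i) * spin (x j))
        + \sum_i h i * spin (x i)).

Definition ising (J : 'M[R]_n) (h : 'I_n -> R) (x : config) : R :=
  ising_weight J h x / \sum_(y : config) ising_weight J h y.

Definition setspin (x : config) (i : 'I_n) (s : bool) : config :=
  [ffun j => if j == i then s else x j].

Definition cond_law (J : 'M[R]_n) (h : 'I_n -> R) (i : 'I_n) (x : config)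
  (s : bool) : R :=
  ising J h (setspin x i s) / \sum_(t : bool) ising J h (setspin x i t).

Definition dTV (p q : bool -> R) : R := 2^-1 * \sum_(s : bool) `|p s - q s|.

Definition agree_off (k : 'I_n) (x z : config) : bool :=
  [forall j, (j != k) ==> (x j == z j)].

(* the coupling matrix A of q^n (sup over a finite nonempty set of
   nonnegative reals = max starting from 0) *)
Definition coupling_matrix (J : 'M[R]_n) (h : 'I_n -> R) : 'M[R]_n :=
  \matrix_(i, k) if i == k then 0 else
    \big[Num.max/0]_(xz : config * config | agree_off k xz.1 xz.2)
       dTV (cond_law J h i xz.1) (cond_law J h i xz.2).

Definition norm11 (J : 'M[R]_n) : R := \big[Num.max/0]_i \sum_j `|J i j|.

Definition normInf (h : 'I_n -> R) : R := \big[Num.max/0]_i `|h i|.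

Definition l2 (x : 'cV[R]_n) : R := Num.sqrt (\sum_i x i 0 ^+ 2).

Definition opnorm22 (A : 'M[R]_n) : R :=
  sup [set l2 (A *m x) | x in [set x : 'cV[R]_n | l2 x <= 1]].

End Ising.

(* The conditional law of spin i is the logistic function of twice its local
   field [\sum_j J i j * sigma_j + h i].  Flipping spin k moves that field by
   at most [2 |J i k|], and the logistic function is 1/4-Lipschitz, so the
   coupling matrix is dominated entrywise by [|J|].  As [J] is symmetric, the
   row and column sums of [|J|] are bounded by [||J||_{1->1}], and the Schur
   test bounds [||A||_{2->2}] by the same quantity.  If moreover the field is
   bounded, [|local field| <= ||J||_{1->1} + ||h||_oo <= 1 + alpha'], the
   logistic function keeps the conditional law away from 0 and 1. *)
From HB Require Import structures.
From mathcomp Require Import all_boot all_order all_algebra.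
From mathcomp Require Import all_classical all_reals all_analysis.
From mathcomp Require Import ring lra.
Set Implicit Arguments. Unset Strict Implicit. Unset Printing Implicit Defensive.
Import Order.TTheory GRing.Theory Num.Theory.
Import numFieldNormedType.Exports.
Local Open Scope ring_scope.

Section Logistic.
Variable R : realType.

Definition logistic (d : R) : R := (1 + (expR d)^-1)^-1.

Lemma is_derive_logistic (d : R) :
  is_derive d 1 logistic (expR d / (1 + expR d) ^+ 2).
Proof.
have ed0 := expR_gt0 d.
have ed_neq0 : expR d != 0 by rewrite gt_eqF.
have dinv := is_deriveV ed_neq0 (is_derive_expR d).
have dden := is_deriveD (is_derive_cst (1 : R) d 1) dinv.
have den_neq0 : (cst 1 + (fun y => (expR y)^-1)) d != 0.
  by rewrite /= gt_eqF // addr_gt0 // invr_gt0.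
apply: trigger_derive (is_deriveV den_neq0 dden) _.
rewrite /GRing.scale /= add0r.
have -> : (cst 1 + (fun y => (expR y)^-1)) d = 1 + (expR d)^-1 by [].
have ed1_neq0 : 1 + expR d != 0 by rewrite gt_eqF // addr_gt0.
by field; rewrite ed_neq0 ed1_neq0.
Qed.

Lemma continuous_logistic : continuous logistic.
Proof.
move=> d; apply: differentiable_continuous; apply/derivable1_diffP.
by have [] := is_derive_logistic d.
Qed.

Lemma logistic_lipschitz (a b : R) :
  `|logistic a - logistic b| <= `|a - b| / 4.
Proof.
wlog ab : a b / a <= b.
  by move=> W; case: (leP a b) => [/W//|/ltW/W]; rewrite distrC (distrC a).
rewrite distrC; have [c _ ->] := MVT_segment ab (fun x _ => is_derive_logistic x)
  (continuous_subspaceT continuous_logistic).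
have ec0 := expR_gt0 c.
have slope_ge0 : 0 <= expR c / (1 + expR c) ^+ 2 by rewrite divr_ge0 ?ltW.
have slope_le : expR c / (1 + expR c) ^+ 2 <= 4^-1.
  rewrite ler_pdivrMr ?exprn_gt0 ?addr_gt0 // -subr_ge0.
  have -> : 4^-1 * (1 + expR c) ^+ 2 - expR c = 4^-1 * (1 - expR c) ^+ 2.
    by field.
  by rewrite mulr_ge0 ?sqr_ge0.
rewrite normrM (ger0_norm slope_ge0) mulrC distrC.
by rewrite ler_wpM2l.
Qed.

Lemma logisticN (d : R) : logistic (- d) = 1 - logistic d.
Proof.
rewrite /logistic expRN invrK.
have ed0 := expR_gt0 d.
by field; rewrite !gt_eqF ?addr_gt0 ?invr_gt0.
Qed.

Lemma logistic_ge (K d : R) : - K <= d -> (1 + expR K)^-1 <= logistic d.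
Proof.
move=> Kd; rewrite /logistic -expRN.
by rewrite lef_pV2 ?posrE ?addr_gt0 ?expR_gt0 // lerD2l ler_expR lerNl.
Qed.

Lemma logistic_bounds (K d : R) : `|d| <= K ->
  (1 + expR K)^-1 <= logistic d <= 1 - (1 + expR K)^-1.
Proof.
rewrite ler_norml => /andP[Kd dK].
rewrite logistic_ge //= lerBrDl -lerBrDr -logisticN.
by apply: logistic_ge; rewrite lerN2.
Qed.

End Logistic.

Lemma sqr_sum_le_weighted (R : realDomainType) (I : finType) (b y : I -> R) :
  (forall k, 0 <= b k) ->
  (\sum_k b k * y k) ^+ 2 <= (\sum_k b k) * (\sum_k b k * y k ^+ 2).
Proof.
move=> b_ge0.
have lhsE : (\sum_k b k * y k) ^+ 2 = \sum_k \sum_l (b k * y k) * (b l * y l).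
  by rewrite expr2 mulr_suml; apply: eq_bigr => k _; rewrite mulr_sumr.
have rhsE : (\sum_k b k) * (\sum_k b k * y k ^+ 2) =
            \sum_k \sum_l b k * (b l * y l ^+ 2).
  by rewrite mulr_suml; apply: eq_bigr => k _; rewrite mulr_sumr.
have rhsE' : (\sum_k b k) * (\sum_k b k * y k ^+ 2) =
             \sum_k \sum_l b l * (b k * y k ^+ 2).
  by rewrite rhsE exchange_big.
rewrite -(@ler_pM2l _ 2) //.
have -> : 2 * ((\sum_k b k) * (\sum_k b k * y k ^+ 2)) =
    \sum_k \sum_l b k * (b l * y l ^+ 2) + \sum_k \sum_l b l * (b k * y k ^+ 2).
  by rewrite -rhsE -rhsE'; ring.
rewrite -big_split /= lhsE mulr_sumr; apply: ler_sum => k _.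
rewrite mulr_sumr -big_split; apply: ler_sum => l _ /=.
rewrite -subr_ge0.
have -> : b k * (b l * y l ^+ 2) + b l * (b k * y k ^+ 2)
          - 2 * (b k * y k * (b l * y l)) = b k * b l * (y k - y l) ^+ 2 by ring.
by rewrite mulr_ge0 ?sqr_ge0 ?mulr_ge0.
Qed.

Section SchurTest.
Variables (R : realType) (n : nat) (A B : 'M[R]_n) (M : R).
Hypothesis A_le_B : forall i k, `|A i k| <= B i k.
Hypothesis rowB : forall i, \sum_k B i k <= M.
Hypothesis colB : forall k, \sum_i B i k <= M.
Hypothesis M_ge0 : 0 <= M.

Let B_ge0 i k : 0 <= B i k. Proof. exact: le_trans (A_le_B i k). Qed.

Lemma sqr_mulmx_row_le (x : 'cV[R]_n) i :
  (A *m x) i 0 ^+ 2 <= M * \sum_k B i k * x k 0 ^+ 2.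
Proof.
have norm_le : `|(A *m x) i 0| <= \sum_k B i k * `|x k 0|.
  rewrite mxE; apply: le_trans (ler_norm_sum _ _ _) _.
  by apply: ler_sum => k _; rewrite normrM ler_wpM2r.
rewrite -real_normK ?num_real //.
apply: le_trans (_ : (\sum_k B i k * `|x k 0|) ^+ 2 <= _).
  by rewrite ler_pXn2r ?nnegrE ?(le_trans _ norm_le).
apply: le_trans (sqr_sum_le_weighted (fun k => `|x k 0|) (B_ge0 i)) _.
rewrite [X in _ * X <= _](eq_bigr (fun k => B i k * x k 0 ^+ 2));
  last by move=> k _; rewrite real_normK ?num_real.
by rewrite ler_wpM2r // sumr_ge0 // => k _; rewrite mulr_ge0 ?sqr_ge0.
Qed.

Lemma sum_sqr_mulmx_le (x : 'cV[R]_n) :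
  \sum_i (A *m x) i 0 ^+ 2 <= M ^+ 2 * \sum_k x k 0 ^+ 2.
Proof.
apply: le_trans (ler_sum _ (fun i _ => sqr_mulmx_row_le x i)) _.
rewrite -mulr_sumr expr2 -mulrA ler_wpM2l // exchange_big /= mulr_sumr.
apply: ler_sum => k _; rewrite -mulr_suml.
by rewrite ler_wpM2r ?sqr_ge0.
Qed.

Lemma l2_mulmx_le (x : 'cV[R]_n) : l2 (A *m x) <= M * l2 x.
Proof.
rewrite /l2 -(ger0_norm M_ge0) -sqrtr_sqr -sqrtrM ?sqr_ge0 //.
by rewrite ler_wsqrtr // sum_sqr_mulmx_le.
Qed.

Lemma opnorm22_le_Schur : opnorm22 A <= M.
Proof.
apply: ge_sup.
  exists (l2 (A *m 0)), 0 => //=.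
  by rewrite /l2 big1 ?sqrtr0 // => i _; rewrite mxE expr0n.
move=> _ [x /= x_le1 <-].
apply: le_trans (l2_mulmx_le x) _.
by rewrite -[leRHS]mulr1 ler_wpM2l.
Qed.

End SchurTest.

Lemma dTV_bool (R : realType) (p q : bool -> R) :
  p false = 1 - p true -> q false = 1 - q true ->
  dTV p q = `|p true - q true|.
Proof.
move=> pF qF; rewrite /dTV big_bool /= pF qF.
have -> : 1 - p true - (1 - q true) = - (p true - q true) by ring.
by rewrite normrN; field.
Qed.

Lemma spin_dist (R : realType) (b c : bool) : `|spin R b - spin R c| <= 2.
Proof.
by case: b; case: c; rewrite /spin ?subrr ?normr0 // ?opprK -?opprD ?normrN
  ger0_norm.
Qed.

Lemma norm_spin (R : realType) (b : bool) : `|spin R b| = 1.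
Proof. by case: b; rewrite /spin ?normrN normr1. Qed.

Lemma sum_pred1 (V : nmodType) (I : finType) (F : I -> V) i :
  \sum_j (if j == i then F j else 0) = F i.
Proof. by rewrite -big_mkcond big_pred1_eq. Qed.

Lemma setspinE n (x : config n) i s j :
  setspin x i s j = if j == i then s else x j.
Proof. by rewrite ffunE. Qed.

Section IsingConditional.
Variables (R : realType) (n : nat) (J : 'M[R]_n) (h : 'I_n -> R).
Hypothesis J_sym : J^T = J.
Hypothesis J_diag0 : forall i, J i i = 0.

Definition ising_energy (x : config n) : R :=
  2^-1 * (\sum_i \sum_j J i j * spin R (x i) * spin R (x j))
  + \sum_i h i * spin R (x i).

Definition local_field (i : 'I_n) (x : config n) : R :=
  \sum_j J i j * spin R (x j) + h i.

Lemma ising_energy_flip i (x : config n) :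
  ising_energy (setspin x i true) - ising_energy (setspin x i false) =
  2 * local_field i x.
Proof.
have Jsym j k : J j k = J k j by rewrite -{1}J_sym mxE.
set a := fun j => spin R (setspin x i true j).
set b := fun j => spin R (setspin x i false j).
set c := fun j => spin R (x j).
have ac j : j != i -> a j = c j by rewrite /a /c setspinE => /negbTE ->.
have bc j : j != i -> b j = c j by rewrite /b /c setspinE => /negbTE ->.
have ai : a i = 1 by rewrite /a setspinE eqxx.
have bi : b i = -1 by rewrite /b setspinE eqxx.
have quad j k : J j k * a j * a k - J j k * b j * b k =
    (if j == i then 2 * J i k * c k else 0)
  + (if k == i then 2 * J i j * c j else 0).
  case: (eqVneq j i) => [->|ji]; case: (eqVneq k i) => [->|ki].
  - by rewrite J_diag0; ring.
  - by rewrite ai bi (ac _ ki) (bc _ ki) addr0; ring.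
  - by rewrite ai bi (ac _ ji) (bc _ ji) add0r Jsym; ring.
  - by rewrite (ac _ ji) (bc _ ji) (ac _ ki) (bc _ ki) subrr addr0.
have lin j : h j * a j - h j * b j = if j == i then 2 * h i else 0.
  case: (eqVneq j i) => [->|ji]; first by rewrite ai bi; ring.
  by rewrite (ac _ ji) (bc _ ji) subrr.
rewrite /ising_energy -/a -/b opprD addrACA -mulrBr -!sumrB.
rewrite [X in _ + X](eq_bigr _ (fun j _ => lin j)) sum_pred1.
under eq_bigr => j _ do rewrite -sumrB (eq_bigr _ (fun k _ => quad j k)) big_split /=.
rewrite big_split /=.
under [X in _ * (_ + X)]eq_bigr => j _ do rewrite (sum_pred1 (fun _ => 2 * J i j * c j)).
rewrite (eq_bigr (fun j => if j == i then \sum_k 2 * J i k * c k else 0));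
  last by move=> j _; case: (j == i) => //; rewrite big1.
have -> : \sum_k 2 * J i k * c k = 2 * \sum_k J i k * c k.
  by rewrite mulr_sumr; apply: eq_bigr => k _; rewrite mulrA.
by rewrite sum_pred1 /local_field -/c; field.
Qed.

Lemma ising_partition_gt0 : 0 < \sum_(y : config n) ising_weight J h y.
Proof.
rewrite (bigD1 [ffun=> true]) //= ltr_pwDl ?expR_gt0 //.
by apply: sumr_ge0 => y _; rewrite ltW // expR_gt0.
Qed.

Lemma cond_law_true i (x : config n) :
  cond_law J h i x true = logistic (2 * local_field i x).
Proof.
rewrite -ising_energy_flip /cond_law /ising big_bool /= /logistic /ising_weight.
rewrite -/(ising_energy _) -/(ising_energy _) expRD expRN.
have Z_gt0 := ising_partition_gt0.
have e1 := expR_gt0 (ising_energy (setspin x i true)).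
have e0 := expR_gt0 (ising_energy (setspin x i false)).
by field; rewrite !gt_eqF ?addr_gt0.
Qed.

Lemma cond_law_false i (x : config n) :
  cond_law J h i x false = 1 - cond_law J h i x true.
Proof.
rewrite /cond_law /ising big_bool /=.
have Z_gt0 := ising_partition_gt0.
have e1 := expR_gt0 (ising_energy (setspin x i true)).
have e0 := expR_gt0 (ising_energy (setspin x i false)).
by field; rewrite !gt_eqF ?addr_gt0 ?mulr_gt0 ?invr_gt0.
Qed.

Lemma local_field_agree_off i k (x z : config n) : agree_off k x z ->
  `|local_field i x - local_field i z| <= 2 * `|J i k|.
Proof.
move=> /forallP agree.
have -> : local_field i x - local_field i z =
          \sum_j (if j == k then J i k * (spin R (x k) - spin R (z k)) else 0).
  rewrite /local_field opprD addrACA subrr addr0 -sumrB; apply: eq_bigr => j _.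
  case: (eqVneq j k) => [->|jk]; first by ring.
  by move: (agree j); rewrite jk /= => /eqP ->; rewrite subrr.
by rewrite sum_pred1 normrM mulrC ler_wpM2r // spin_dist.
Qed.

Lemma coupling_matrix_bound i k :
  0 <= coupling_matrix J h i k <= `|J i k|.
Proof.
rewrite mxE; case: (eqVneq i k) => [->|ik]; first by rewrite J_diag0 normr0 lexx.
rewrite bigmax_ge_id /=; apply: bigmax_le => // -[x z] /= agree.
rewrite dTV_bool ?cond_law_false // !cond_law_true.
apply: le_trans (logistic_lipschitz _ _) _.
rewrite -mulrBr normrM ger0_norm // ler_pdivrMr //.
have := local_field_agree_off i agree; lra.
Qed.

Lemma opnorm22_coupling_matrix_le : opnorm22 (coupling_matrix J h) <= norm11 J.
Proof.
have row_le i : \sum_k `|J i k| <= norm11 J.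
  exact: (le_bigmax _ (fun i => \sum_k `|J i k|)).
apply: (opnorm22_le_Schur (B := \matrix_(i, k) `|J i k|)).
- move=> i k; have /andP[A_ge0 A_le] := coupling_matrix_bound i k.
  by rewrite [leRHS]mxE ger0_norm.
- by move=> i; under eq_bigr do rewrite mxE.
- move=> k; under eq_bigr do rewrite mxE.
  by rewrite (eq_bigr (fun i => `|J k i|)) // => i _; rewrite -{1}J_sym mxE.
- exact: bigmax_ge_id.
Qed.

Lemma local_field_bound i (x : config n) :
  `|local_field i x| <= norm11 J + normInf h.
Proof.
apply: le_trans (ler_normD _ _) _; apply: lerD.
  apply: le_trans (ler_norm_sum _ _ _) _.
  apply: le_trans (_ : \sum_j `|J i j| <= _).
    by apply: ler_sum => j _; rewrite normrM norm_spin mulr1.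
  exact: (le_bigmax _ (fun i => \sum_j `|J i j|)).
exact: (le_bigmax _ (fun i => `|h i|)).
Qed.

Lemma cond_law_bounds K i (x : config n) s :
  2 * (norm11 J + normInf h) <= K ->
  (1 + expR K)^-1 <= cond_law J h i x s <= 1 - (1 + expR K)^-1.
Proof.
move=> K_ge; have /logistic_bounds : `|2 * local_field i x| <= K.
  by rewrite normrM ger0_norm // (le_trans _ K_ge) // ler_wpM2l // local_field_bound.
rewrite -cond_law_true; case: s => // /andP[lo hi].
by rewrite cond_law_false lerBrDl -lerBrDr hi lerD2l lerN2 lo.
Qed.

End IsingConditional.

Theorem lemma3p1 (R : realType) (alpha : R) (Halpha : 0 < alpha <= 1) :
  (forall (n : nat) (J : 'M[R]_n) (h : 'I_n -> R),
      J^T = J -> (forall i, J i i = 0) -> norm11 J <= 1 - alpha ->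
      opnorm22 (coupling_matrix J h) <= norm11 J /\ norm11 J <= 1 - alpha)
  /\
  (forall alpha' : R, 0 <= alpha' ->
    exists c C : R, 0 < c /\ 0 < C /\
      forall (n : nat) (J : 'M[R]_n) (h : 'I_n -> R),
        J^T = J -> (forall i, J i i = 0) -> norm11 J <= 1 - alpha ->
        normInf h <= alpha' ->
        forall (i : 'I_n) (x : config n) (s : bool),
          c < cond_law J h i x s < 1 - C).
Proof.
case/andP: Halpha => alpha_gt0 _.
split=> [n J h J_sym J_diag0 J_small|alpha' _].
  by split=> //; apply: opnorm22_coupling_matrix_le.
pose q : R := (1 + expR (2 * (1 + alpha')))^-1.
have q_gt0 : 0 < q by rewrite invr_gt0 addr_gt0 ?expR_gt0.
have q2_gt0 : 0 < q / 2 by rewrite divr_gt0.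
exists (q / 2), (q / 2); do 2!split=> //.
move=> n J h J_sym J_diag0 J_small h_small i x s.
have field_small : 2 * (norm11 J + normInf h) <= 2 * (1 + alpha') by lra.
have /andP[lo hi] := cond_law_bounds J_sym J_diag0 i x s field_small.
rewrite -/q in lo hi.
by apply/andP; split; lra.
Qed.
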